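(* In the linear model setting described in the context, for every $\alpha\in[0,1]$, $$\mathcal R(\hat f_\alpha)\le\sum_{s=1}^Kw_s\mathbb E\big(\langle\boldsymbol X,\boldsymbol\beta^*-\hat{\boldsymbol\beta}\rangle+(b^*_s-\hat b_s)\big)^2+2(1-\sqrt\alpha)\sqrt{\sum_{s=1}^Kw_s(b^*_s-\hat b_s)^2}\sqrt{\sum_{s=1}^Kw_s\Big(\hat b_s-\sum_{s'}w_{s'}\hat b_{s'}\Big)^2}+(1-\sqrt\alpha)^2\sum_{s=1}^Kw_s\Big(\hat b_s-\sum_{s'}w_{s'}\hat b_{s'}\Big)^2.$$
   Context: Model: $Y=\langle\boldsymbol X,\boldsymbol\beta^*\rangle+b^*_S+\xi$, $\boldsymbol X\sim\mathcal N(\boldsymbol0,\boldsymbol\Sigma)$ with $\boldsymbol\Sigma\succ0$, independent of $S\in[K]$, $\xi\sim\mathcal N(0,\sigma^2)$ independent. Observations: for each $s$, $\boldsymbol Y_s=\mathbf X_s\boldsymbol\beta^*+b^*_s\boldsymbol1_{n_s}+\boldsymbol\xi_s$ (i.i.d. $\mathcal N(\boldsymbol0,\boldsymbol\Sigma)$ rows, i.i.d. $\mathcal N(0,\sigma^2)$ noise, all independent); $n=\sum_sn_s$, $w_s=n_s/n$. $(\hat{\boldsymbol\beta},\hat{\boldsymbol b})\in\arg\min_{(\boldsymbol\beta,\boldsymbol b)}\sum_sw_s\frac1{n_s}\|\boldsymbol Y_s-\mathbf X_s\boldsymbol\beta-b_s\boldsymbol1_{n_s}\|_2^2$; $\hat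 f_\alpha(\boldsymbol x,s)=\langle\boldsymbol x,\hat{\boldsymbol\beta}\rangle+\sqrt\alpha\hat b_s+(1-\sqrt\alpha)\sum_{s'}w_{s'}\hat b_{s'}$. Risk (sample fixed): $\mathcal R(f)=\sum_sw_s\mathbb E(\langle\boldsymbol X,\boldsymbol\beta^*\rangle+b^*_s-f(\boldsymbol X,s))^2$ where $\mathbb E$ is over $\boldsymbol X\sim\mathcal N(\boldsymbol0,\boldsymbol\Sigma)$ independent of the sample. *)

From HB Require Import structures.
From mathcomp Require Import all_boot all_order all_algebra.
From mathcomp Require Import all_classical all_reals all_analysis.
Set Implicit Arguments. Unset Strict Implicit. Unset Printing Implicit Defensive.
Import Order.TTheory GRing.Theory Num.Theory.
Local Open Scope classical_set_scope.
Local Open Scope ring_scope.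

Section Defs.
Context {R : realType}.

Definition inner (d : nat) (x : 'rV[R]_d) (beta : 'cV[R]_d) : R := (x *m beta) 0 0.

Definition sqnorm (m : nat) (v : 'cV[R]_m) : R := \sum_(i < m) v i 0 ^+ 2.

Definition posdef (d : nat) (S : 'M[R]_d) : Prop :=
  S^T = S /\ forall u : 'rV[R]_d, u != 0 -> 0 < (u *m S *m u^T) 0 0.

(* X : T -> R^d is N(0, Sigma) under P: every nonzero linear combination
   <X, u> is measurable with law N(0, u Sigma u^T) (Cramer-Wold definition;
   normal_prob takes the standard deviation). *)
Definition is_gaussian_vector (dd : measure_display) (T : measurableType dd)
  (P : probability T R) (d : nat) (S : 'M[R]_d) (X : T -> 'rV[R]_d) : Prop :=
  forall u : 'cV[R]_d, u != 0 ->
    measurable_fun [set: T] (fun w => inner (X w) u) /\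
    forall A : set R, measurable A ->
      P ((fun w => inner (X w) u) @^-1` A) =
      normal_prob 0 (Num.sqrt ((u^T *m S *m u) 0 0)) A.

Definition weight (K : nat) (n : 'I_K -> nat) (s : 'I_K) : R :=
  (n s)%:R / (\sum_(s' < K) n s')%:R.

Definition ls_obj (K d : nat) (n : 'I_K -> nat)
  (Xs : forall s : 'I_K, 'M[R]_(n s, d)) (Ys : forall s : 'I_K, 'cV[R]_(n s))
  (beta : 'cV[R]_d) (b : 'I_K -> R) : R :=
  \sum_(s < K) weight n s * (n s)%:R^-1 *
     sqnorm (Ys s - Xs s *m beta - b s *: const_mx 1).

Definition wmean (K : nat) (n : 'I_K -> nat) (b : 'I_K -> R) : R :=
  \sum_(s' < K) weight n s' * b s'.

Definition f_alpha (K d : nat) (n : 'I_K -> nat) (alpha : R)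
  (betah : 'cV[R]_d) (bh : 'I_K -> R) (x : 'rV[R]_d) (s : 'I_K) : R :=
  inner x betah + Num.sqrt alpha * bh s + (1 - Num.sqrt alpha) * wmean n bh.

(* risk R(f), expectation over X ~ P independent of the (fixed) sample *)
Definition risk (dd : measure_display) (T : measurableType dd)
  (P : probability T R) (K d : nat) (n : 'I_K -> nat) (X : T -> 'rV[R]_d)
  (betastar : 'cV[R]_d) (bstar : 'I_K -> R) (f : 'rV[R]_d -> 'I_K -> R) : \bar R :=
  (\sum_(s < K) (weight n s)%:E *
     'E_P[fun w => ((inner (X w) betastar + bstar s - f (X w) s) ^+ 2)%R])%E.

End Defs.

(* Write c = 1 - sqrt alpha and e_s = bh_s - wmean bh.  At every (x, s) the
   error of f_alpha is the error of the least-squares predictor plus c e_s.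
   Expanding the square and averaging over s with the weights w_s, the cross
   term with <x, betastar - betah> vanishes because the e_s have weighted mean
   zero, the cross term with bstar_s - bh_s is bounded by the weighted
   Cauchy-Schwarz inequality, and what remains is c^2 sum_s w_s e_s^2.  The
   bound holds for every x, so it survives taking expectations. *)
From HB Require Import structures.
From mathcomp Require Import all_boot all_order all_algebra.
From mathcomp Require Import ring lra.
From mathcomp Require Import all_classical all_reals all_analysis.
From mathcomp Require Import measurable_realfun.
Import Order.TTheory GRing.Theory Num.Theory.
Local Open Scope classical_set_scope.
Local Open Scope ring_scope.

Lemma weighted_CauchySchwarz (R : realFieldType) (K : nat) (w a b : 'I_K -> R) :
  (forall i, 0 <= w i) ->
  (\sum_i w i * a i * b i) ^+ 2 <=
  (\sum_i w i * a i ^+ 2) * (\sum_i w i * b i ^+ 2).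
Proof.
move=> w_ge0.
set A := \sum_i w i * a i ^+ 2; set B := \sum_i w i * b i ^+ 2.
set C := \sum_i w i * a i * b i.
have AB : A * B = \sum_i \sum_j w i * a i ^+ 2 * (w j * b j ^+ 2).
  by rewrite /A /B mulr_suml; apply: eq_bigr => i _; rewrite mulr_sumr.
have BA : A * B = \sum_i \sum_j w j * a j ^+ 2 * (w i * b i ^+ 2).
  by rewrite AB exchange_big.
have CC : C ^+ 2 = \sum_i \sum_j w i * a i * b i * (w j * a j * b j).
  by rewrite /C expr2 mulr_suml; apply: eq_bigr => i _; rewrite mulr_sumr.
have lagrange : \sum_i \sum_j w i * w j * (a i * b j - a j * b i) ^+ 2 =
    A * B + A * B - 2 * C ^+ 2.
  rewrite {1}AB BA CC mulr_sumr -big_split -sumrB /=; apply: eq_bigr => i _.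
  by rewrite mulr_sumr -big_split -sumrB /=; apply: eq_bigr => j _; ring.
have : 0 <= A * B + A * B - 2 * C ^+ 2.
  rewrite -lagrange; apply: sumr_ge0 => i _; apply: sumr_ge0 => j _.
  exact: mulr_ge0 (mulr_ge0 (w_ge0 i) (w_ge0 j)) (sqr_ge0 _).
lra.
Qed.

Lemma weighted_CauchySchwarz_sqrt (R : rcfType) (K : nat) (w a b : 'I_K -> R) :
  (forall i, 0 <= w i) ->
  \sum_i w i * a i * b i <=
  Num.sqrt (\sum_i w i * a i ^+ 2) * Num.sqrt (\sum_i w i * b i ^+ 2).
Proof.
move=> w_ge0.
have sum_ge0 (f : 'I_K -> R) : 0 <= \sum_i w i * f i ^+ 2.
  by apply: sumr_ge0 => i _; rewrite mulr_ge0 ?sqr_ge0.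
rewrite -sqrtrM //; apply: le_trans (ler_norm _) _.
by rewrite -sqrtr_sqr ler_sqrt ?mulr_ge0 // weighted_CauchySchwarz.
Qed.

Lemma weighted_sum_centered (R : pzRingType) (K : nat) (w b : 'I_K -> R) :
  \sum_i w i = 1 -> \sum_i w i * (b i - \sum_j w j * b j) = 0.
Proof.
move=> w_sum1; rewrite (eq_bigr _ (fun i _ => mulrBr _ _ _)) sumrB.
by rewrite -mulr_suml w_sum1 mul1r subrr.
Qed.

Lemma weighted_sqr_shift_le (R : rcfType) (K : nat) (w a e : 'I_K -> R)
    (L c : R) :
  (forall s, 0 <= w s) -> \sum_s w s * e s = 0 -> 0 <= c ->
  \sum_s w s * (L + (a s + c * e s)) ^+ 2 <=
  \sum_s w s * (L + a s) ^+ 2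
  + 2 * c * Num.sqrt (\sum_s w s * a s ^+ 2) * Num.sqrt (\sum_s w s * e s ^+ 2)
  + c ^+ 2 * \sum_s w s * e s ^+ 2.
Proof.
move=> w_ge0 we0 c_ge0.
have expand : \sum_s w s * (L + (a s + c * e s)) ^+ 2 =
    \sum_s w s * (L + a s) ^+ 2 + 2 * c * (\sum_s w s * a s * e s)
    + 2 * c * L * (\sum_s w s * e s) + c ^+ 2 * \sum_s w s * e s ^+ 2.
  by rewrite !mulr_sumr -!big_split; apply: eq_bigr => s _ /=; ring.
rewrite expand we0 mulr0 addr0 lerD2r lerD2l -[leRHS]mulrA.
by apply: ler_wpM2l; [rewrite mulr_ge0 | exact: weighted_CauchySchwarz_sqrt].
Qed.

Lemma weight_ge0 (R : realType) (K : nat) (n : 'I_K -> nat) (s : 'I_K) :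
  0 <= weight (R:=R) n s.
Proof. by rewrite /weight divr_ge0. Qed.

Lemma sum_weight (R : realType) (K : nat) (n : 'I_K -> nat) :
  (0 < \sum_s n s)%N -> \sum_s weight (R:=R) n s = 1.
Proof.
by move=> n_gt0; rewrite /weight -mulr_suml -natr_sum divff // pnatr_eq0 -lt0n.
Qed.

Section WeightedExpectation.
Context d (T : measurableType d) (R : realType) (P : probability T R).
Local Open Scope ereal_scope.

Lemma ge0_expectationD_cst (G : T -> R) (k : R) :
  measurable_fun setT G -> (forall x, 0 <= G x)%R -> (0 <= k)%R ->
  'E_P[fun x => G x + k]%R = 'E_P[G] + k%:E.
Proof.
move=> mG G_ge0 k_ge0; rewrite !expectation.unlock.
under eq_integral do rewrite EFinD.
rewrite ge0_integralD //; last exact/measurable_EFinP.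
  by rewrite integral_cst //= probability_setT mule1.
by move=> x _; rewrite lee_fin.
Qed.

Variables (K : nat) (w : 'I_K -> R).
Hypothesis w_ge0 : forall s, (0 <= w s)%R.

Lemma ge0_expectation_weighted_sum (F : 'I_K -> T -> R) :
  (forall s, measurable_fun setT (F s)) -> (forall s x, 0 <= F s x)%R ->
  \sum_s (w s)%:E * 'E_P[F s] = 'E_P[fun x => \sum_s w s * F s x]%R.
Proof.
move=> mF F_ge0; rewrite expectation.unlock.
under eq_integral do rewrite -sumEFin.
rewrite ge0_integral_sum //; last first.
- by move=> s x _; rewrite lee_fin mulr_ge0.
- by move=> s; apply/measurable_EFinP/measurable_funM.
apply: eq_bigr => s _.
under [in RHS]eq_integral do rewrite EFinM.
rewrite ge0_integralZl_EFin //; last exact/measurable_EFinP.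
by move=> x _; rewrite lee_fin.
Qed.

Lemma weighted_expectation_le (F G : 'I_K -> T -> R) (k : R) :
  (forall s, measurable_fun setT (F s)) -> (forall s x, 0 <= F s x)%R ->
  (forall s, measurable_fun setT (G s)) -> (forall s x, 0 <= G s x)%R ->
  (0 <= k)%R ->
  (forall x, \sum_s w s * F s x <= \sum_s w s * G s x + k)%R ->
  \sum_s (w s)%:E * 'E_P[F s] <= \sum_s (w s)%:E * 'E_P[G s] + k%:E.
Proof.
move=> mF F_ge0 mG G_ge0 k_ge0 FG.
have msum (H : 'I_K -> T -> R) : (forall s, measurable_fun setT (H s)) ->
    measurable_fun setT (fun x => \sum_s w s * H s x)%R.
  by move=> mH; apply: measurable_sum => s; exact: measurable_funM.
have sum_ge0 (H : 'I_K -> T -> R) : (forall s x, 0 <= H s x)%R ->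
    forall x, (0 <= \sum_s w s * H s x)%R.
  by move=> H_ge0 x; apply: sumr_ge0 => s _; rewrite mulr_ge0.
rewrite !ge0_expectation_weighted_sum //.
rewrite -(ge0_expectationD_cst _ _ (msum _ mG) (sum_ge0 _ G_ge0) k_ge0).
apply: expectation_le; [exact: msum | | exact: sum_ge0 | | exact: aeW].
- by apply: measurable_funD; [exact: msum | exact: measurable_cst].
- by move=> x; rewrite addr_ge0 ?sum_ge0.
Qed.

End WeightedExpectation.

Lemma gaussian_vector_inner_measurable (R : realType) (d : measure_display)
    (T : measurableType d) (P : probability T R) (m : nat) (S : 'M[R]_m)
    (X : T -> 'rV[R]_m) (u : 'cV[R]_m) :
  is_gaussian_vector P S X -> measurable_fun setT (fun x => inner (X x) u).
Proof.
move=> gX; have [->|u_neq0] := eqVneq u 0; last exact: (gX u u_neq0).1.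
rewrite (_ : (fun x => _) = cst 0); first exact: measurable_cst.
by apply/funext => x; rewrite /inner mulmx0 mxE.
Qed.

Lemma risk_f_alpha (R : realType) (d : measure_display) (T : measurableType d)
    (P : probability T R) (K m : nat) (n : 'I_K -> nat) (X : T -> 'rV[R]_m)
    (betastar betah : 'cV[R]_m) (bstar bh : 'I_K -> R) (alpha : R) :
  risk P n X betastar bstar (f_alpha n alpha betah bh) =
  (\sum_s (weight n s)%:E * 'E_P[fun x =>
     ((inner (X x) (betastar - betah)
       + ((bstar s - bh s) + (1 - Num.sqrt alpha) * (bh s - wmean n bh))) ^+ 2)%R])%E.
Proof.
apply: eq_bigr => s _; congr (_ * 'E_P[_])%E; apply/funext => x.
by rewrite /f_alpha /inner mulmxBr !mxE; ring.
Qed.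

Theorem lemma15 (R : realType) (dd : measure_display) (T : measurableType dd)
  (P : probability T R) (K d : nat) (Sigma : 'M[R]_d) (X : T -> 'rV[R]_d)
  (betastar : 'cV[R]_d) (bstar : 'I_K -> R)
  (n : 'I_K -> nat) (Xs : forall s : 'I_K, 'M[R]_(n s, d))
  (Ys : forall s : 'I_K, 'cV[R]_(n s))
  (betah : 'cV[R]_d) (bh : 'I_K -> R) (alpha : R) :
  (0 < K)%N ->
  posdef Sigma ->
  is_gaussian_vector P Sigma X ->
  (forall s, (0 < n s)%N) ->
  (exists xi : forall s : 'I_K, 'cV[R]_(n s),
     forall s, Ys s = Xs s *m betastar + bstar s *: const_mx 1 + xi s) ->
  (forall (beta : 'cV[R]_d) (b : 'I_K -> R),
     ls_obj Xs Ys betah bh <= ls_obj Xs Ys beta b) ->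
  0 <= alpha <= 1 ->
  (risk P n X betastar bstar (f_alpha n alpha betah bh) <=
   (\sum_(s < K) (weight n s)%:E *
      'E_P[fun w => ((inner (X w) (betastar - betah) + (bstar s - bh s)) ^+ 2)%R])
   + (2 * (1 - Num.sqrt alpha)
        * Num.sqrt (\sum_(s < K) weight n s * (bstar s - bh s) ^+ 2)
        * Num.sqrt (\sum_(s < K) weight n s * (bh s - wmean n bh) ^+ 2))%:E
   + ((1 - Num.sqrt alpha) ^+ 2
        * \sum_(s < K) weight n s * (bh s - wmean n bh) ^+ 2)%:E)%E.
Proof.
move=> K_gt0 _ gX n_gt0 _ _ /andP[_ alpha_le1].
have n_sum_gt0 : (0 < \sum_s n s)%N.
  by rewrite (bigD1 (Ordinal K_gt0)) //= ltn_addr.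
have c_ge0 : 0 <= 1 - Num.sqrt alpha by rewrite subr_ge0 -sqrtr1 ler_sqrt.
have mL : measurable_fun setT (fun x => inner (X x) (betastar - betah)).
  exact: gaussian_vector_inner_measurable gX.
have msqr (a : R) :
    measurable_fun setT (fun x => (inner (X x) (betastar - betah) + a) ^+ 2).
  by apply: measurable_funX; apply: measurable_funD.
rewrite risk_f_alpha -addeA -EFinD.
apply: weighted_expectation_le.
- exact: weight_ge0.
- by move=> s; apply: msqr.
- by move=> s x; apply: sqr_ge0.
- by move=> s; apply: msqr.
- by move=> s x; apply: sqr_ge0.
- have B_ge0 : 0 <= \sum_s weight n s * (bh s - wmean n bh) ^+ 2.
    by apply: sumr_ge0 => s _; rewrite mulr_ge0 ?weight_ge0 ?sqr_ge0.
  by rewrite addr_ge0 ?mulr_ge0 ?sqrtr_ge0 ?sqr_ge0.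
- move=> x; rewrite addrA.
  apply: (@weighted_sqr_shift_le _ _ _ (fun s => bstar s - bh s)
                                   (fun s => bh s - wmean n bh)) => //.
  + exact: weight_ge0.
  + exact/weighted_sum_centered/sum_weight.
Qed.
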